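(* Let $n\ge0$ and let $k,k_0,k_1,\dots,k_n$ be integers with $k_0,\dots,k_n\neq0$. Then $$\Big|\int_{-\pi}^{\pi}\frac{\sin(k\beta/2)}{2\sin(\beta/2)}\prod_{j=0}^{n}\frac{\sin(k_j\beta/2)}{k_j\sin(\beta/2)}\,d\beta\Big|\le4,\qquad \Big|\int_{-\pi}^{\pi}\frac{\cos(\beta/2)\sin(k\beta/2)}{2\sin(\beta/2)}\prod_{j=0}^{n}\frac{\sin(k_j\beta/2)}{k_j\sin(\beta/2)}\,d\beta\Big|\le\frac{10}{3}.$$ *)

From Stdlib Require Import Reals.
From Coquelicot Require Import Coquelicot.
Open Scope R_scope.

Fixpoint prod_upto (f : nat -> R) (n : nat) : R :=
  match n with
  | O => f O
  | S m => prod_upto f m * f (S m)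
  end.

Definition dfac (m : Z) (b : R) : R :=
  sin (IZR m * b / 2) / (IZR m * sin (b / 2)).

(* Each factor [sin (m b / 2) / (m sin (b / 2))] is the average of the
   [cos (t b / 2)] over [t = m - 1, m - 3, ..., 1 - m], so the product of the
   factors is a convex combination of cosines [cos (s b / 2)], and
   [sin (k b / 2) / (2 sin (b / 2))] is [sgn k / 2] times such a sum of [|k|]
   cosines.  Integrating term by term, the pair [cos (s b / 2) cos (t b / 2)]
   contributes the average of [c (s + t)] and [c (s - t)], where
   [c t = \int_{-PI}^{PI} cos (t b / 2) db].  Summed over the [t] of the kernel
   of [k] this telescopes, because [c] has a step-2 antidifference [F]
   ([F t - F (t - 2) = c t]) which is [+-PI] at even [t] and a partial sum of
   the Leibniz series [4 - 4/3 + 4/5 - ...] at odd [t]; hence [|F| <= 4] gives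
   the first bound.  The factor [cos (b / 2)] replaces [c] and [F] by their
   averages at [t +- 1], and two consecutive Leibniz partial sums add up to at
   most [20/3], while [PI <= 10/3]. *)

From Stdlib Require Import Reals ZArith Lra Lia List.
From Coquelicot Require Import Coquelicot.
Open Scope R_scope.

Lemma PI_le_10_3 : PI <= 10 / 3.
Proof.
  destruct (PI_ineq 3) as [_ H]. unfold tg_alt, PI_tg in H. simpl in H. lra.
Qed.

Fixpoint alt_sum (a : nat -> R) (n : nat) : R :=
  match n with
  | O => 0
  | S n => a O - alt_sum (fun i => a (S i)) n
  end.

Lemma alt_sum_succ_sub (a : nat -> R) (n : nat) :
  alt_sum a (S n) - alt_sum a n = (-1) ^ n * a n.
Proof.
  revert a; induction n as [|n IH]; intros a; simpl.
  - ring.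
  - specialize (IH (fun i => a (S i))). simpl in IH. lra.
Qed.

Lemma alt_sum_bounds (a : nat -> R) (n : nat) :
  (forall i, 0 <= a i) -> (forall i, a (S i) <= a i) -> 0 <= alt_sum a n <= a O.
Proof.
  revert a; induction n as [|n IH]; intros a Ha0 Hdec; simpl.
  - specialize (Ha0 O). lra.
  - destruct (IH (fun i => a (S i))) as [Hlo Hhi]; auto.
    specialize (Hdec O). lra.
Qed.

Lemma alt_sum_add_succ (a : nat -> R) (n : nat) :
  alt_sum a n + alt_sum a (S n) = a O + alt_sum (fun i => a i - a (S i)) n.
Proof.
  revert a; induction n as [|n IH]; intros a.
  - simpl. ring.
  - change (alt_sum a (S (S n))) with (a O - alt_sum (fun i => a (S i)) (S n)).
    change (alt_sum a (S n)) with (a O - alt_sum (fun i => a (S i)) n).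
    change (alt_sum (fun i => a i - a (S i)) (S n))
      with (a O - a 1%nat - alt_sum (fun i => a (S i) - a (S (S i))) n).
    specialize (IH (fun i => a (S i))). cbv beta in IH. lra.
Qed.

Definition leibniz_term (i : nat) : R := 4 / (2 * INR i + 1).

Definition leibniz (n : nat) : R := alt_sum leibniz_term n.

Lemma leibniz_term_nonneg (i : nat) : 0 <= leibniz_term i.
Proof.
  unfold leibniz_term. pose proof (pos_INR i).
  apply Rlt_le, Rdiv_lt_0_compat; lra.
Qed.

Lemma leibniz_term_decr (i : nat) : leibniz_term (S i) <= leibniz_term i.
Proof.
  unfold leibniz_term. rewrite S_INR. pose proof (pos_INR i).
  apply Rmult_le_compat_l; [lra|]. apply Rinv_le_contravar; lra.
Qed.

Lemma leibniz_term_convex (i : nat) :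
  leibniz_term (S i) - leibniz_term (S (S i)) <= leibniz_term i - leibniz_term (S i).
Proof.
  unfold leibniz_term. rewrite !S_INR. pose proof (pos_INR i).
  set (x := 2 * INR i + 1).
  replace (2 * (INR i + 1) + 1) with (x + 2) by (unfold x; ring).
  replace (2 * (INR i + 1 + 1) + 1) with (x + 4) by (unfold x; ring).
  assert (Hx : 0 < x) by (unfold x; lra).
  apply Rminus_le_0.
  replace (4 / x - 4 / (x + 2) - (4 / (x + 2) - 4 / (x + 4)))
    with (32 / (x * (x + 2) * (x + 4))) by (field; lra).
  apply Rlt_le, Rdiv_lt_0_compat; [lra|].
  apply Rmult_lt_0_compat; [apply Rmult_lt_0_compat|]; lra.
Qed.

Lemma leibniz_bounds (n : nat) : 0 <= leibniz n <= 4.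
Proof.
  replace 4 with (leibniz_term O) by (unfold leibniz_term; simpl; field).
  apply alt_sum_bounds; [apply leibniz_term_nonneg | apply leibniz_term_decr].
Qed.

(* The differences of [leibniz_term] are again nonincreasing, which pins
   [leibniz n + leibniz (S n)] between [leibniz_term 0] and
   [2 leibniz_term 0 - leibniz_term 1]. *)
Lemma leibniz_add_succ_bounds (n : nat) : 0 <= leibniz n + leibniz (S n) <= 20 / 3.
Proof.
  unfold leibniz. rewrite alt_sum_add_succ.
  destruct (alt_sum_bounds (fun i => leibniz_term i - leibniz_term (S i)) n) as [Hlo Hhi].
  - intros i. pose proof (leibniz_term_decr i). lra.
  - apply leibniz_term_convex.
  - assert (H0 : leibniz_term O = 4) by (unfold leibniz_term; simpl; field).
    assert (H1 : leibniz_term 1 = 4 / 3) by (unfold leibniz_term; simpl; field).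
    lra.
Qed.

(* A list [(w_1, t_1); ...; (w_n, t_n)] stands for the trigonometric
   polynomial [b |-> w_1 cos (t_1 b / 2) + ... + w_n cos (t_n b / 2)]. *)
Fixpoint wsum (g : Z -> R) (p : list (R * Z)) : R :=
  match p with
  | nil => 0
  | (w, t) :: p => w * g t + wsum g p
  end.

Definition cos_eval (p : list (R * Z)) (b : R) : R :=
  wsum (fun t => cos (IZR t * b / 2)) p.

Definition mass (p : list (R * Z)) : R := wsum (fun _ => 1) p.

Definition nonneg (p : list (R * Z)) : Prop := List.Forall (fun wt => 0 <= fst wt) p.

Definition wscale (c : R) (p : list (R * Z)) : list (R * Z) :=
  map (fun wt => (c * fst wt, snd wt)) p.

(* Products are expanded by [cos x cos y = (cos (x + y) + cos (x - y)) / 2]. *)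
Fixpoint wmul_term (w : R) (s : Z) (q : list (R * Z)) : list (R * Z) :=
  match q with
  | nil => nil
  | (v, t) :: q => (w * v / 2, (s + t)%Z) :: (w * v / 2, (s - t)%Z) :: wmul_term w s q
  end.

Fixpoint wmul (p q : list (R * Z)) : list (R * Z) :=
  match p with
  | nil => nil
  | (w, s) :: p => wmul_term w s q ++ wmul p q
  end.

Definition avg_shift (g : Z -> R) (t s : Z) : R := (g (s + t)%Z + g (s - t)%Z) / 2.

Fixpoint wprod_upto (p : nat -> list (R * Z)) (n : nat) : list (R * Z) :=
  match n with
  | O => p O
  | S m => wmul (wprod_upto p m) (p (S m))
  end.

Fixpoint ladder (a : Z) (m : nat) : list (R * Z) :=
  match m with
  | O => nil
  | S m => (1, a) :: ladder (a - 2)%Z m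
  end.

Lemma wsum_app (g : Z -> R) (p q : list (R * Z)) :
  wsum g (p ++ q) = wsum g p + wsum g q.
Proof. induction p as [|[w t] p IH]; simpl; [ring | rewrite IH; ring]. Qed.

Lemma wsum_ext (f g : Z -> R) (p : list (R * Z)) :
  (forall t, f t = g t) -> wsum f p = wsum g p.
Proof.
  intros Hfg. induction p as [|[w t] p IH]; simpl; [reflexivity|].
  rewrite Hfg, IH. reflexivity.
Qed.

Lemma wsum_mult_l (c : R) (g : Z -> R) (p : list (R * Z)) :
  wsum (fun t => c * g t) p = c * wsum g p.
Proof. induction p as [|[w t] p IH]; simpl; [ring | rewrite IH; ring]. Qed.

Lemma wsum_const (c : R) (p : list (R * Z)) : wsum (fun _ => c) p = c * mass p.
Proof. unfold mass. rewrite <- wsum_mult_l. apply wsum_ext. intros; ring. Qed.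

Lemma wsum_wscale (g : Z -> R) (c : R) (p : list (R * Z)) :
  wsum g (wscale c p) = c * wsum g p.
Proof. induction p as [|[w t] p IH]; simpl; [ring | rewrite IH; ring]. Qed.

Lemma wsum_wmul_term (g : Z -> R) (w : R) (s : Z) (q : list (R * Z)) :
  wsum g (wmul_term w s q) = w * wsum (fun t => avg_shift g t s) q.
Proof.
  induction q as [|[v t] q IH]; simpl; [ring|].
  rewrite IH. unfold avg_shift. field.
Qed.

Lemma wsum_wmul (g : Z -> R) (p q : list (R * Z)) :
  wsum g (wmul p q) = wsum (fun s => wsum (fun t => avg_shift g t s) q) p.
Proof.
  induction p as [|[w s] p IH]; simpl; [reflexivity|].
  rewrite wsum_app, wsum_wmul_term, IH. reflexivity.
Qed.

Lemma Rabs_wsum_le (g : Z -> R) (C : R) (p : list (R * Z)) :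
  nonneg p -> (forall t, Rabs (g t) <= C) -> Rabs (wsum g p) <= C * mass p.
Proof.
  intros Hp Hg. unfold mass.
  induction Hp as [|[w t] p Hw Hp IH]; simpl in *.
  - rewrite Rabs_R0. lra.
  - eapply Rle_trans; [apply Rabs_triang|].
    rewrite Rabs_mult, (Rabs_right w) by lra.
    pose proof (Rmult_le_compat_l w _ _ Hw (Hg t)). lra.
Qed.

Lemma mass_wmul (p q : list (R * Z)) : mass (wmul p q) = mass p * mass q.
Proof.
  unfold mass at 1. rewrite wsum_wmul.
  rewrite (wsum_ext _ (fun _ => mass q)), wsum_const; [ring|].
  intros s. apply wsum_ext. intros t. unfold avg_shift. field.
Qed.

Lemma nonneg_wscale (c : R) (p : list (R * Z)) : 0 <= c -> nonneg p -> nonneg (wscale c p).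
Proof.
  intros Hc Hp. induction Hp; constructor; simpl; auto. apply Rmult_le_pos; assumption.
Qed.

Lemma nonneg_wmul_term (w : R) (s : Z) (q : list (R * Z)) :
  0 <= w -> nonneg q -> nonneg (wmul_term w s q).
Proof.
  intros Hw Hq. induction Hq as [|[v t] q Hv Hq IH]; simpl in *; [constructor|].
  assert (0 <= w * v / 2) by (apply Rmult_le_pos; [apply Rmult_le_pos|]; lra).
  constructor; [|constructor]; simpl; assumption.
Qed.

Lemma nonneg_wmul (p q : list (R * Z)) : nonneg p -> nonneg q -> nonneg (wmul p q).
Proof.
  intros Hp Hq. induction Hp as [|[w s] p Hw Hp IH]; simpl in *; [constructor|].
  apply List.Forall_app. split; [apply nonneg_wmul_term|]; assumption.
Qed.

Lemma nonneg_ladder (a : Z) (m : nat) : nonneg (ladder a m).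
Proof.
  revert a. induction m as [|m IH]; intros a; simpl; constructor; [simpl; lra | apply IH].
Qed.

Lemma mass_ladder (a : Z) (m : nat) : mass (ladder a m) = INR m.
Proof.
  unfold mass. revert a. induction m as [|m IH]; intros a; [reflexivity|].
  simpl ladder. simpl wsum. rewrite IH, S_INR. ring.
Qed.

Lemma wsum_ladder_telescope (g T : Z -> R) (a : Z) (m : nat) :
  (forall x, g x = T x - T (x - 2)%Z) ->
  wsum g (ladder a m) = T a - T (a - 2 * Z.of_nat m)%Z.
Proof.
  intros HT. revert a. induction m as [|m IH]; intros a; simpl ladder; simpl wsum.
  - replace (a - 2 * Z.of_nat 0)%Z with a by lia. ring.
  - rewrite IH, HT. replace (a - 2 - 2 * Z.of_nat m)%Z with (a - 2 * Z.of_nat (S m))%Z by lia.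
    ring.
Qed.

Lemma cos_mul_cos_half (s t : Z) (b : R) :
  cos (IZR s * b / 2) * cos (IZR t * b / 2)
  = (cos (IZR (s + t) * b / 2) + cos (IZR (s - t) * b / 2)) / 2.
Proof.
  rewrite plus_IZR, minus_IZR.
  replace ((IZR s + IZR t) * b / 2) with (IZR s * b / 2 + IZR t * b / 2) by lra.
  replace ((IZR s - IZR t) * b / 2) with (IZR s * b / 2 - IZR t * b / 2) by lra.
  rewrite cos_plus, cos_minus. lra.
Qed.

Lemma cos_eval_wmul (p q : list (R * Z)) (b : R) :
  cos_eval (wmul p q) b = cos_eval p b * cos_eval q b.
Proof.
  unfold cos_eval. rewrite wsum_wmul, Rmult_comm, <- wsum_mult_l.
  apply wsum_ext. intros s. rewrite Rmult_comm, <- wsum_mult_l.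
  apply wsum_ext. intros t. rewrite cos_mul_cos_half. reflexivity.
Qed.

Lemma cos_eval_wscale (c : R) (p : list (R * Z)) (b : R) :
  cos_eval (wscale c p) b = c * cos_eval p b.
Proof. apply wsum_wscale. Qed.

Lemma prod_upto_ext (f g : nat -> R) (n : nat) :
  (forall j, (j <= n)%nat -> f j = g j) -> prod_upto f n = prod_upto g n.
Proof.
  induction n as [|n IH]; intros Hfg; simpl.
  - apply Hfg. lia.
  - rewrite (Hfg (S n)) by lia. rewrite IH; [reflexivity|].
    intros j Hj. apply Hfg. lia.
Qed.

Lemma cos_eval_wprod_upto (p : nat -> list (R * Z)) (n : nat) (b : R) :
  cos_eval (wprod_upto p n) b = prod_upto (fun j => cos_eval (p j) b) n.
Proof. induction n as [|n IH]; simpl; [|rewrite cos_eval_wmul, IH]; reflexivity. Qed.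

Lemma wprod_upto_distribution (p : nat -> list (R * Z)) (n : nat) :
  (forall j, (j <= n)%nat -> nonneg (p j) /\ mass (p j) = 1) ->
  nonneg (wprod_upto p n) /\ mass (wprod_upto p n) = 1.
Proof.
  induction n as [|n IH]; intros Hp; simpl; [apply Hp; lia|].
  destruct IH as [Hnn Hm]; [intros j Hj; apply Hp; lia|].
  destruct (Hp (S n) (le_n _)) as [Hnn' Hm'].
  split; [apply nonneg_wmul; assumption|]. rewrite mass_wmul, Hm, Hm'. ring.
Qed.

Lemma avg_shift_comm (g : Z -> R) (t s : Z) :
  (forall x, g (- x)%Z = g x) -> avg_shift g t s = avg_shift g s t.
Proof.
  intros Hg. unfold avg_shift.
  rewrite <- (Hg (s - t)%Z), Z.add_comm. replace (- (s - t))%Z with (t - s)%Z by ring.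
  reflexivity.
Qed.

Lemma avg_shift_even (g : Z -> R) (t : Z) :
  (forall x, g (- x)%Z = g x) -> forall s, avg_shift g t (- s) = avg_shift g t s.
Proof.
  intros Hg s. unfold avg_shift.
  rewrite <- (Hg (- s + t)%Z), <- (Hg (- s - t)%Z).
  replace (- (- s + t))%Z with (s - t)%Z by ring.
  replace (- (- s - t))%Z with (s + t)%Z by ring. field.
Qed.

Lemma avg_shift_antidiff (g T : Z -> R) (t : Z) :
  (forall x, g x = T x - T (x - 2)%Z) ->
  forall s, avg_shift g t s = avg_shift T t s - avg_shift T t (s - 2).
Proof.
  intros HT s. unfold avg_shift. rewrite !HT.
  replace (s - 2 + t)%Z with (s + t - 2)%Z by ring.
  replace (s - 2 - t)%Z with (s - t - 2)%Z by ring. field.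
Qed.

Lemma Rabs_avg_shift_le (T : Z -> R) (C : R) (t s : Z) :
  (forall x, Rabs (T x) <= C) -> Rabs (avg_shift T t s) <= C.
Proof.
  intros HC. unfold avg_shift, Rdiv.
  rewrite Rabs_mult, (Rabs_right (/ 2)) by lra.
  pose proof (Rabs_triang (T (s + t)%Z) (T (s - t)%Z)).
  pose proof (HC (s + t)%Z). pose proof (HC (s - t)%Z). lra.
Qed.

Definition dirichlet (m : nat) : list (R * Z) := ladder (Z.of_nat m - 1) m.

Lemma wsum_dirichlet_telescope (g T : Z -> R) (m : nat) :
  (forall x, g x = T x - T (x - 2)%Z) ->
  wsum g (dirichlet m) = T (Z.of_nat m - 1)%Z - T (- Z.of_nat m - 1)%Z.
Proof.
  intros HT. unfold dirichlet. rewrite (wsum_ladder_telescope g T) by exact HT.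
  replace (Z.of_nat m - 1 - 2 * Z.of_nat m)%Z with (- Z.of_nat m - 1)%Z by ring.
  reflexivity.
Qed.

(* [2 sin (b / 2) cos (x b / 2) = sin ((x + 1) b / 2) - sin ((x - 1) b / 2)]
   telescopes along the frequencies of the kernel. *)
Lemma sin_mul_cos_eval_dirichlet (m : nat) (b : R) :
  sin (b / 2) * cos_eval (dirichlet m) b = sin (INR m * b / 2).
Proof.
  unfold cos_eval. rewrite <- wsum_mult_l.
  rewrite (wsum_dirichlet_telescope _ (fun x => sin (IZR (x + 1) * b / 2) / 2)).
  - replace (Z.of_nat m - 1 + 1)%Z with (Z.of_nat m) by ring.
    replace (- Z.of_nat m - 1 + 1)%Z with (- Z.of_nat m)%Z by ring.
    rewrite opp_IZR, <- INR_IZR_INZ.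
    replace (- INR m * b / 2) with (- (INR m * b / 2)) by lra.
    rewrite sin_neg. lra.
  - intros x. rewrite !plus_IZR, minus_IZR.
    replace ((IZR x + 1) * b / 2) with (IZR x * b / 2 + b / 2) by lra.
    replace ((IZR x - 2 + 1) * b / 2) with (IZR x * b / 2 - b / 2) by lra.
    rewrite sin_plus, sin_minus. lra.
Qed.

Lemma IZR_sgn_abs_nat (m : Z) : IZR m = IZR (Z.sgn m) * INR (Z.abs_nat m).
Proof. rewrite INR_IZR_INZ, Zabs2Nat.id_abs, <- mult_IZR, Z.mul_comm, Z.abs_sgn. reflexivity. Qed.

Lemma sin_IZR_mul (m : Z) (x : R) :
  sin (IZR m * x) = IZR (Z.sgn m) * sin (INR (Z.abs_nat m) * x).
Proof.
  rewrite (IZR_sgn_abs_nat m) at 1.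
  destruct m; simpl Z.sgn; rewrite ?Rmult_0_l, ?sin_0, ?Rmult_1_l; try ring.
  replace (-1 * INR (Z.abs_nat (Z.neg p)) * x) with (- (INR (Z.abs_nat (Z.neg p)) * x)) by ring.
  rewrite sin_neg. ring.
Qed.

Definition dfac_coeffs (m : Z) : list (R * Z) :=
  wscale (/ INR (Z.abs_nat m)) (dirichlet (Z.abs_nat m)).

Definition half_dirichlet (k : Z) : list (R * Z) :=
  wscale (IZR (Z.sgn k) / 2) (dirichlet (Z.abs_nat k)).

Lemma dfac_cos_eval (m : Z) (b : R) :
  m <> 0%Z -> sin (b / 2) <> 0 -> dfac m b = cos_eval (dfac_coeffs m) b.
Proof.
  intros Hm Hb. unfold dfac, dfac_coeffs. rewrite cos_eval_wscale.
  assert (Hsgn : IZR (Z.sgn m) <> 0) by (apply not_0_IZR; destruct m; simpl; lia).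
  assert (Habs : INR (Z.abs_nat m) <> 0) by (apply not_0_INR; lia).
  replace (IZR m * b / 2) with (IZR m * (b / 2)) by lra.
  rewrite sin_IZR_mul, (IZR_sgn_abs_nat m).
  replace (INR (Z.abs_nat m) * (b / 2)) with (INR (Z.abs_nat m) * b / 2) by lra.
  rewrite <- sin_mul_cos_eval_dirichlet. field. auto.
Qed.

Lemma half_dirichlet_cos_eval (k : Z) (b : R) :
  sin (b / 2) <> 0 -> sin (IZR k * b / 2) / (2 * sin (b / 2)) = cos_eval (half_dirichlet k) b.
Proof.
  intros Hb. unfold half_dirichlet. rewrite cos_eval_wscale.
  replace (IZR k * b / 2) with (IZR k * (b / 2)) by lra.
  rewrite sin_IZR_mul.
  replace (INR (Z.abs_nat k) * (b / 2)) with (INR (Z.abs_nat k) * b / 2) by lra.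
  rewrite <- sin_mul_cos_eval_dirichlet. field. exact Hb.
Qed.

Lemma dfac_coeffs_distribution (m : Z) :
  m <> 0%Z -> nonneg (dfac_coeffs m) /\ mass (dfac_coeffs m) = 1.
Proof.
  intros Hm. assert (Habs : 0 < INR (Z.abs_nat m)) by (apply lt_0_INR; lia).
  unfold dfac_coeffs. split.
  - apply nonneg_wscale; [apply Rlt_le, Rinv_0_lt_compat, Habs | apply nonneg_ladder].
  - unfold mass. rewrite wsum_wscale. fold (mass (dirichlet (Z.abs_nat m))).
    unfold dirichlet. rewrite mass_ladder. field. lra.
Qed.

Definition cos_integral (t : Z) : R :=
  if Z.eq_dec t 0 then 2 * PI else 4 * sin (IZR t * PI / 2) / IZR t.

Definition leibnizZ (m : Z) : R := IZR (Z.sgn m) * leibniz (Z.abs_nat m).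

Definition cos_integral_antidiff (t : Z) : R :=
  if Z.even t then (if (0 <=? t)%Z then PI else - PI) else leibnizZ (Z.div2 t + 1).

Lemma sin_odd_half_PI (n : nat) : sin ((2 * INR n + 1) * PI / 2) = (-1) ^ n.
Proof.
  induction n as [|n IH].
  - simpl. replace ((2 * 0 + 1) * PI / 2) with (PI / 2) by field. apply sin_PI2.
  - rewrite S_INR.
    replace ((2 * (INR n + 1) + 1) * PI / 2) with ((2 * INR n + 1) * PI / 2 + PI) by field.
    rewrite neg_sin, IH. simpl. ring.
Qed.

Lemma cos_integral_opp (t : Z) : cos_integral (- t) = cos_integral t.
Proof.
  unfold cos_integral.
  destruct (Z.eq_dec (- t) 0), (Z.eq_dec t 0); try lia; [reflexivity|].
  assert (Ht : IZR t <> 0) by (apply not_0_IZR; assumption).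
  rewrite opp_IZR. replace (- IZR t * PI / 2) with (- (IZR t * PI / 2)) by lra.
  rewrite sin_neg. field. exact Ht.
Qed.

Lemma cos_integral_odd (n : nat) :
  cos_integral (2 * Z.of_nat n + 1) = (-1) ^ n * leibniz_term n.
Proof.
  unfold cos_integral, leibniz_term.
  destruct (Z.eq_dec (2 * Z.of_nat n + 1) 0); [lia|].
  replace (IZR (2 * Z.of_nat n + 1)) with (2 * INR n + 1)
    by (rewrite plus_IZR, mult_IZR, <- INR_IZR_INZ; reflexivity).
  rewrite sin_odd_half_PI. field. pose proof (pos_INR n). lra.
Qed.

Lemma leibnizZ_of_nat (n : nat) : leibnizZ (Z.of_nat n) = leibniz n.
Proof.
  unfold leibnizZ. rewrite Zabs2Nat.id.
  destruct n as [|n]; simpl; [unfold leibniz; simpl|]; ring.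
Qed.

Lemma leibnizZ_opp (m : Z) : leibnizZ (- m) = - leibnizZ m.
Proof.
  unfold leibnizZ. rewrite Z.sgn_opp, opp_IZR.
  replace (Z.abs_nat (- m)) with (Z.abs_nat m) by lia. ring.
Qed.

Lemma leibnizZ_succ_sub (q : Z) :
  leibnizZ (q + 1) - leibnizZ q = cos_integral (2 * q + 1).
Proof.
  destruct (Z_le_gt_dec 0 q) as [Hq | Hq].
  - rewrite <- (Z2Nat.id q) by exact Hq. set (n := Z.to_nat q).
    replace (Z.of_nat n + 1)%Z with (Z.of_nat (S n)) by lia.
    rewrite !leibnizZ_of_nat, cos_integral_odd. apply alt_sum_succ_sub.
  - set (n := Z.to_nat (- q - 1)).
    replace (q + 1)%Z with (- Z.of_nat n)%Z by lia.
    replace q with (- Z.of_nat (S n))%Z by lia.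
    replace (2 * - Z.of_nat (S n) + 1)%Z with (- (2 * Z.of_nat n + 1))%Z by lia.
    rewrite !leibnizZ_opp, !leibnizZ_of_nat, cos_integral_opp, cos_integral_odd.
    rewrite <- (alt_sum_succ_sub leibniz_term n). unfold leibniz. ring.
Qed.

Lemma cos_integral_antidiff_double (q : Z) :
  cos_integral_antidiff (2 * q) = if (0 <=? q)%Z then PI else - PI.
Proof.
  unfold cos_integral_antidiff. rewrite Z.even_mul, Z.even_2, Bool.orb_true_l.
  destruct (Z.leb_spec 0 (2 * q)), (Z.leb_spec 0 q); lia || reflexivity.
Qed.

Lemma cos_integral_antidiff_double_succ (q : Z) :
  cos_integral_antidiff (2 * q + 1) = leibnizZ (q + 1).
Proof.
  unfold cos_integral_antidiff.
  rewrite Z.even_add, Z.even_mul, Z.even_2, Z.even_1, Bool.orb_true_l.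
  rewrite Z.div2_div. replace ((2 * q + 1) / 2)%Z with q; [reflexivity|].
  replace (2 * q + 1)%Z with (1 + q * 2)%Z by ring. rewrite Z.div_add by lia. reflexivity.
Qed.

Lemma cos_integral_antidiff_step (t : Z) :
  cos_integral t = cos_integral_antidiff t - cos_integral_antidiff (t - 2).
Proof.
  destruct (Z.Even_or_Odd t) as [[q ->] | [q ->]].
  - replace (2 * q - 2)%Z with (2 * (q - 1))%Z by ring.
    rewrite !cos_integral_antidiff_double. unfold cos_integral.
    destruct (Z.eq_dec (2 * q) 0) as [Hq | Hq].
    + replace q with 0%Z by lia. simpl. ring.
    + rewrite sin_eq_0_1 by (exists q; rewrite mult_IZR; field).
      destruct (Z.leb_spec 0 q), (Z.leb_spec 0 (q - 1)); try lia;
        field; apply not_0_IZR; exact Hq.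
  - replace (2 * q + 1 - 2)%Z with (2 * (q - 1) + 1)%Z by ring.
    rewrite !cos_integral_antidiff_double_succ.
    replace (q - 1 + 1)%Z with q by ring. symmetry. apply leibnizZ_succ_sub.
Qed.

Lemma Rabs_leibnizZ_le (m : Z) : Rabs (leibnizZ m) <= 4.
Proof.
  unfold leibnizZ. rewrite Rabs_mult. pose proof (leibniz_bounds (Z.abs_nat m)).
  rewrite (Rabs_right (leibniz _)) by lra.
  assert (Rabs (IZR (Z.sgn m)) <= 1).
  { destruct m; simpl; rewrite ?Rabs_R0, ?Rabs_R1, ?Rabs_m1; lra. }
  pose proof (Rabs_pos (IZR (Z.sgn m))). nra.
Qed.

Lemma Rabs_cos_integral_antidiff_le (t : Z) : Rabs (cos_integral_antidiff t) <= 4.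
Proof.
  pose proof PI_4. pose proof PI_RGT_0.
  destruct (Z.Even_or_Odd t) as [[q ->] | [q ->]].
  - rewrite cos_integral_antidiff_double.
    destruct (0 <=? q)%Z; [rewrite Rabs_right | rewrite Rabs_left]; lra.
  - rewrite cos_integral_antidiff_double_succ. apply Rabs_leibnizZ_le.
Qed.

Lemma Rabs_leibnizZ_add_pred_le (q : Z) : Rabs (leibnizZ (q + 1) + leibnizZ q) <= 20 / 3.
Proof.
  destruct (Z_le_gt_dec 0 q) as [Hq | Hq].
  - rewrite <- (Z2Nat.id q) by exact Hq. set (n := Z.to_nat q).
    replace (Z.of_nat n + 1)%Z with (Z.of_nat (S n)) by lia.
    rewrite !leibnizZ_of_nat. pose proof (leibniz_add_succ_bounds n).
    rewrite Rabs_right; lra.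
  - set (n := Z.to_nat (- q - 1)).
    replace (q + 1)%Z with (- Z.of_nat n)%Z by lia.
    replace q with (- Z.of_nat (S n))%Z by lia.
    rewrite !leibnizZ_opp, !leibnizZ_of_nat. pose proof (leibniz_add_succ_bounds n).
    rewrite Rabs_left1; lra.
Qed.

Lemma Rabs_avg_shift_cos_integral_antidiff_le (t : Z) :
  Rabs (avg_shift cos_integral_antidiff 1 t) <= 10 / 3.
Proof.
  unfold avg_shift. pose proof PI_le_10_3. pose proof PI_RGT_0.
  destruct (Z.Even_or_Odd t) as [[q ->] | [q ->]].
  - replace (2 * q - 1)%Z with (2 * (q - 1) + 1)%Z by ring.
    rewrite !cos_integral_antidiff_double_succ. replace (q - 1 + 1)%Z with q by ring.
    pose proof (Rabs_leibnizZ_add_pred_le q).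
    unfold Rdiv. rewrite Rabs_mult, (Rabs_right (/ 2)) by lra. lra.
  - replace (2 * q + 1 + 1)%Z with (2 * (q + 1))%Z by ring.
    replace (2 * q + 1 - 1)%Z with (2 * q)%Z by ring.
    rewrite !cos_integral_antidiff_double.
    destruct (Z.leb_spec 0 (q + 1)), (Z.leb_spec 0 q); try lia.
    + rewrite Rabs_right; lra.
    + replace ((PI + - PI) / 2) with 0 by field. rewrite Rabs_R0. lra.
    + rewrite Rabs_left; lra.
Qed.

Lemma is_RInt_wsum (f : Z -> R -> R) (I : Z -> R) (a b : R) (p : list (R * Z)) :
  (forall t, is_RInt (f t) a b (I t)) ->
  is_RInt (fun x => wsum (fun t => f t x) p) a b (wsum I p).
Proof.
  intros Hf. induction p as [|[w t] p IH]; simpl.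
  - pose proof (@is_RInt_const R_NormedModule a b 0) as H0.
    change (is_RInt (fun _ : R => 0) a b ((b - a) * 0)) in H0.
    rewrite Rmult_0_r in H0. exact H0.
  - apply (is_RInt_plus (fun x => w * f t x) (fun x => wsum (fun t => f t x) p)); [|exact IH].
    apply (is_RInt_scal (f t) a b w (I t)), Hf.
Qed.

Lemma is_RInt_cos_half (t : Z) :
  is_RInt (fun b => cos (IZR t * b / 2)) (- PI) PI (cos_integral t).
Proof.
  unfold cos_integral. destruct (Z.eq_dec t 0) as [-> | Ht].
  - apply (is_RInt_ext (fun _ => 1)).
    + intros x _. replace (IZR 0 * x / 2) with 0 by lra. rewrite cos_0. reflexivity.
    + pose proof (@is_RInt_const R_NormedModule (- PI) PI 1) as H1.
      change (is_RInt (fun _ : R => 1) (- PI) PI ((PI - - PI) * 1)) in H1.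
      replace ((PI - - PI) * 1) with (2 * PI) in H1 by ring. exact H1.
  - assert (Ht' : IZR t <> 0) by (apply not_0_IZR; exact Ht).
    replace (4 * sin (IZR t * PI / 2) / IZR t)
      with (minus (2 * sin (IZR t * PI / 2) / IZR t) (2 * sin (IZR t * - PI / 2) / IZR t)).
    + apply (is_RInt_derive (fun b => 2 * sin (IZR t * b / 2) / IZR t)).
      * intros x _. auto_derive; [exact I|].
        change (IZR t * x * / 2) with (IZR t * x / 2). field. exact Ht'.
      * intros x _. apply (ex_derive_continuous (fun b => cos (IZR t * b / 2))).
        auto_derive. exact I.
    + unfold minus, plus, opp; simpl.
      replace (IZR t * - PI / 2) with (- (IZR t * PI / 2)) by lra.
      rewrite sin_neg. field. exact Ht'.
Qed.

Lemma RInt_ext_off_point (f g : R -> R) (a c b : R) :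
  a <= c <= b -> ex_RInt g a b -> (forall x, a < x < b -> x <> c -> f x = g x) ->
  RInt f a b = RInt g a b.
Proof.
  intros Hc Hg Hfg.
  assert (Hg1 : ex_RInt g a c) by (apply (ex_RInt_Chasles_1 g a c b); assumption).
  assert (Hg2 : ex_RInt g c b) by (apply (ex_RInt_Chasles_2 g a c b); assumption).
  assert (Hfg1 : forall x, Rmin a c < x < Rmax a c -> g x = f x).
  { intros x Hx. rewrite Rmin_left, Rmax_right in Hx by lra. symmetry; apply Hfg; lra. }
  assert (Hfg2 : forall x, Rmin c b < x < Rmax c b -> g x = f x).
  { intros x Hx. rewrite Rmin_left, Rmax_right in Hx by lra. symmetry; apply Hfg; lra. }
  rewrite <- (RInt_Chasles f a c b), <- (RInt_Chasles g a c b) by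
    (assumption || apply (ex_RInt_ext g); assumption).
  rewrite (RInt_ext f g a c), (RInt_ext f g c b) by (intros; symmetry; auto).
  reflexivity.
Qed.

Lemma sin_half_neq_0 (b : R) : - PI < b < PI -> b <> 0 -> sin (b / 2) <> 0.
Proof.
  intros Hb Hb0. destruct (Rlt_dec 0 b).
  - pose proof (sin_gt_0 (b / 2)). lra.
  - replace (b / 2) with (- (- b / 2)) by lra. rewrite sin_neg.
    assert (0 < sin (- b / 2)) by (apply sin_gt_0; lra). lra.
Qed.

Lemma RInt_eq_cos_eval (f : R -> R) (p : list (R * Z)) :
  (forall b, sin (b / 2) <> 0 -> f b = cos_eval p b) ->
  RInt f (- PI) PI = wsum cos_integral p.
Proof.
  intros Hf.
  assert (Hp : is_RInt (cos_eval p) (- PI) PI (wsum cos_integral p))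
    by (apply is_RInt_wsum, is_RInt_cos_half).
  pose proof PI_RGT_0.
  rewrite (RInt_ext_off_point f (cos_eval p) (- PI) 0 PI).
  - apply is_RInt_unique, Hp.
  - lra.
  - exists (wsum cos_integral p). exact Hp.
  - intros b Hb Hb0. apply Hf, sin_half_neq_0; assumption.
Qed.

Section DirichletPairing.

Variables (g T : Z -> R) (C : R).
Hypothesis g_even : forall x, g (- x)%Z = g x.
Hypothesis g_antidiff : forall x, g x = T x - T (x - 2)%Z.
Hypothesis T_bound : forall x, Rabs (T x) <= C.

Lemma Rabs_wsum_half_dirichlet_le (s k : Z) :
  Rabs (wsum (fun t => avg_shift g t s) (half_dirichlet k)) <= C.
Proof.
  unfold half_dirichlet. rewrite wsum_wscale.
  rewrite (wsum_ext _ (avg_shift g s)) by (intros t; apply avg_shift_comm, g_even).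
  rewrite (wsum_dirichlet_telescope _ (avg_shift T s)) by (apply avg_shift_antidiff, g_antidiff).
  set (u := avg_shift T s (Z.of_nat (Z.abs_nat k) - 1)).
  set (v := avg_shift T s (- Z.of_nat (Z.abs_nat k) - 1)).
  assert (Hu : Rabs u <= C) by (apply Rabs_avg_shift_le, T_bound).
  assert (Hv : Rabs v <= C) by (apply Rabs_avg_shift_le, T_bound).
  assert (Hsgn : Rabs (IZR (Z.sgn k) / 2) <= / 2).
  { unfold Rdiv. rewrite Rabs_mult, (Rabs_right (/ 2)) by lra.
    destruct k; simpl; rewrite ?Rabs_R0, ?Rabs_R1, ?Rabs_m1; lra. }
  assert (Huv : Rabs (u - v) <= 2 * C).
  { pose proof (Rabs_triang u (- v)) as Htri. rewrite Rabs_Ropp in Htri.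
    unfold Rminus. lra. }
  rewrite Rabs_mult.
  apply Rle_trans with (/ 2 * (2 * C)); [|lra].
  apply Rmult_le_compat; [apply Rabs_pos | apply Rabs_pos | exact Hsgn | lra].
Qed.

Lemma Rabs_wsum_wmul_half_dirichlet_le (p : list (R * Z)) (k : Z) :
  nonneg p -> mass p = 1 -> Rabs (wsum g (wmul p (half_dirichlet k))) <= C.
Proof.
  intros Hp Hmass. rewrite wsum_wmul.
  replace C with (C * mass p) by (rewrite Hmass; ring).
  apply Rabs_wsum_le; [exact Hp|]. intros s. apply Rabs_wsum_half_dirichlet_le.
Qed.

End DirichletPairing.

Definition cos_half : list (R * Z) := (1, 1%Z) :: nil.

Lemma cos_eval_cos_half (b : R) : cos_eval cos_half b = cos (b / 2).
Proof. unfold cos_eval, cos_half; simpl. replace (1 * b / 2) with (b / 2) by field. ring. Qed.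

Lemma wsum_wmul_cos_half (g : Z -> R) (p : list (R * Z)) :
  wsum g (wmul p cos_half) = wsum (avg_shift g 1) p.
Proof. rewrite wsum_wmul. apply wsum_ext. intros s. simpl. ring. Qed.

Theorem lemma3p1 (n : nat) (k : Z) (ks : nat -> Z)
  (Hks : forall j : nat, (j <= n)%nat -> ks j <> 0%Z) :
  Rabs (RInt (fun b => sin (IZR k * b / 2) / (2 * sin (b / 2))
                       * prod_upto (fun j => dfac (ks j) b) n) (- PI) PI) <= 4
  /\
  Rabs (RInt (fun b => cos (b / 2) * sin (IZR k * b / 2) / (2 * sin (b / 2))
                       * prod_upto (fun j => dfac (ks j) b) n) (- PI) PI) <= 10 / 3.
Proof.
  destruct (wprod_upto_distribution (fun j => dfac_coeffs (ks j)) n) as [Hnn Hmass].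
  { intros j Hj. apply dfac_coeffs_distribution, Hks, Hj. }
  set (phi := wprod_upto (fun j => dfac_coeffs (ks j)) n) in *.
  assert (Hphi : forall b, sin (b / 2) <> 0 ->
            prod_upto (fun j => dfac (ks j) b) n = cos_eval phi b).
  { intros b Hb. unfold phi. rewrite cos_eval_wprod_upto.
    apply prod_upto_ext. intros j Hj. apply dfac_cos_eval; [apply Hks, Hj | exact Hb]. }
  split.
  - rewrite (RInt_eq_cos_eval _ (wmul phi (half_dirichlet k))).
    + apply (Rabs_wsum_wmul_half_dirichlet_le cos_integral cos_integral_antidiff);
        [exact cos_integral_opp | exact cos_integral_antidiff_step
        | exact Rabs_cos_integral_antidiff_le | exact Hnn | exact Hmass].
    + intros b Hb. rewrite cos_eval_wmul, <- half_dirichlet_cos_eval, Hphi by exact Hb.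
      ring.
  - rewrite (RInt_eq_cos_eval _ (wmul (wmul phi (half_dirichlet k)) cos_half)).
    + rewrite wsum_wmul_cos_half.
      apply (Rabs_wsum_wmul_half_dirichlet_le _ (avg_shift cos_integral_antidiff 1)).
      * apply avg_shift_even, cos_integral_opp.
      * apply avg_shift_antidiff, cos_integral_antidiff_step.
      * apply Rabs_avg_shift_cos_integral_antidiff_le.
      * exact Hnn.
      * exact Hmass.
    + intros b Hb.
      rewrite !cos_eval_wmul, cos_eval_cos_half, <- half_dirichlet_cos_eval, Hphi by exact Hb.
      unfold Rdiv. ring.
Qed.
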